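(* There is a universal constant $C$ such that for every prime $p$, every positive integer $k$, every $\epsilon\in(0,1)$, and every $g\in\mathbb{Z}_p$, there is a $k$-party, one-round protocol using public randomness for the Sum-Equal problem over $\mathbb{Z}_p$ relative to $g$, with error at most $\epsilon$ and total communication complexity at most $k\log(k/\epsilon)+C\cdot k$.
   Context: Model: parties $P_1,\dots,P_k$ each hold an input $x_i\in\mathbb{Z}_p$; a coordinator (distinct from the parties) wants to compute $f(x_1,\dots,x_k)$. In a one-round protocol with public randomness, a random string $r$ is shared by all parties and the coordinator; each party sends a single message, depending only on its own input and $r$, to the coordinator, who outputs a value depending only on the received messages and $r$; there is no other communication. The protocol has error at most $\epsilon$ if for every input $(x_1,\dots,x_k)$ the probability over $r$ that the output differs from $f(x_1,\dots,x_k)$ is at most $\epsilon$. Total communication complexity is the maximum total number of bits sent by all parties. Sum-Equal relative to $g$: $f(x_1,\dots,x_k)=1$ if $\sum_i x_i\equiv g\pmod p$ and $0$ otherwise. $\log$ is base 2. *)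

From HB Require Import structures.
From mathcomp Require Import all_boot all_order all_algebra.
From mathcomp Require Import reals exp.
Set Implicit Arguments. Unset Strict Implicit. Unset Printing Implicit Defensive.
Import Order.TTheory GRing.Theory Num.Theory.
Local Open Scope ring_scope.

(* Party i sends msg i x_i r (a bit string depending only
   on its own input and r); the coordinator outputs out m r where m i is the
   message received from party i. *)
Record protocol (p k : nat) (Rnd : finType) := Protocol {
  msg : 'I_k -> 'Z_p -> Rnd -> seq bool;
  out : ('I_k -> seq bool) -> Rnd -> bool }.

Definition run (p k : nat) (Rnd : finType) (P : protocol p k Rnd)
  (x : 'I_k -> 'Z_p) (r : Rnd) : bool :=
  out P (fun i => msg P i (x i) r) r.

Definition sum_equal (p k : nat) (g : 'Z_p) (x : 'I_k -> 'Z_p) : bool :=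
  (\sum_(i < k) x i) == g.

Definition error_prob {R : realType} (p k : nat) (Rnd : finType)
  (P : protocol p k Rnd) (f : ('I_k -> 'Z_p) -> bool) (x : 'I_k -> 'Z_p) : R :=
  #|[set r : Rnd | run P x r != f x]|%:R / #|Rnd|%:R.

Definition error_at_most {R : realType} (p k : nat) (Rnd : finType)
  (P : protocol p k Rnd) (f : ('I_k -> 'Z_p) -> bool) (eps : R) : Prop :=
  (0 < #|Rnd|)%N /\ forall x : 'I_k -> 'Z_p, error_prob P f x <= eps.

Definition total_comm_at_most {R : realType} (p k : nat) (Rnd : finType)
  (P : protocol p k Rnd) (b : R) : Prop :=
  forall (x : 'I_k -> 'Z_p) (r : Rnd),
    ((\sum_(i < k) size (msg P i (x i) r))%:R : R) <= b.

Definition log2 (R : realType) (x : R) : R := ln x / ln 2.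

From HB Require Import structures.
From mathcomp Require Import all_boot all_order all_algebra.
From mathcomp Require Import reals exp.
From mathcomp Require Import zify lra.
Import Order.TTheory GRing.Theory Num.Theory.
Set Implicit Arguments. Unset Strict Implicit. Unset Printing Implicit Defensive.

(* The parties multiply their inputs, shifted by -g at party 0, by a shared
   random a in 1..p-1, so that the masked values y_i satisfy
   sum y_i = a (sum x_i - g) mod p, and each sends floor(y_i 2^b / p) in b bits.
   The coordinator sees sum y_i 2^b / p up to an additive error below k.  If
   sum x_i = g, sum y_i is a multiple of p and the coordinator always accepts.
   Otherwise a (sum x_i - g) mod p is a uniformly random nonzero residue, and
   acceptance forces it within k p / 2^b of 0 modulo p, which happens for at
   most 2 k p / 2^b values of a.  Taking b = floor(log2 (k/eps)) + 3 gives error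
   at most eps with k b bits in total. *)

Fixpoint bits (b q : nat) : seq bool :=
  if b is b'.+1 then odd q :: bits b' q./2 else [::].

Fixpoint nat_of_bits (s : seq bool) : nat :=
  if s is c :: s' then c + (nat_of_bits s').*2 else 0.

Lemma size_bits b q : size (bits b q) = b.
Proof. by elim: b q => //= b IHb q; rewrite IHb. Qed.

Lemma bitsK b q : q < 2 ^ b -> nat_of_bits (bits b q) = q.
Proof.
elim: b q => [|b IHb] q /=; first by case: q.
rewrite expnS => q_lt; rewrite IHb ?odd_double_half //.
have := odd_double_half q; lia.
Qed.

Lemma card_le_inj_range (T : finType) (A : {pred T}) (h : T -> nat) m :
  {in A &, injective h} -> {in A, forall t, 0 < h t <= m} -> #|A| <= m.
Proof.
move=> h_inj h_range; rewrite cardE -(size_map h) -(size_iota 1 m).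
apply: uniq_leq_size.
  by rewrite map_inj_in_uniq ?enum_uniq // => s t; rewrite !mem_enum; apply: h_inj.
move=> n /mapP [t]; rewrite mem_enum => /h_range t_range ->; rewrite mem_iota; lia.
Qed.

Lemma modn_mull_inj p d a b : prime p -> ~~ (p %| d) -> a < p -> b < p ->
  a * d = b * d %[mod p] -> a = b.
Proof.
move=> p_prime d_ndvd; wlog le_ab : a b / a <= b.
  by move=> W ha hb e; case: (leqP a b) => [|/ltnW] h; [|symmetry]; apply: W.
move=> _ b_lt /eqP; rewrite eq_sym eqn_mod_dvd ?leq_mul2r ?le_ab ?orbT //.
rewrite -mulnBl Euclid_dvdM // (negbTE d_ndvd) orbF.
case: (posnP (b - a)) => [|ba_gt0 /(dvdn_leq ba_gt0)]; lia.
Qed.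

Lemma modn_mull_gt0 p d a : prime p -> ~~ (p %| d) -> 0 < a -> a < p ->
  0 < (a * d) %% p.
Proof.
move=> p_prime d_ndvd a_gt0 a_lt; rewrite lt0n; apply: contra d_ndvd => /eqP mod0.
have : p %| a * d by rewrite /dvdn mod0.
by rewrite Euclid_dvdM // => /orP [/dvdn_leq|//]; lia.
Qed.

Lemma modn_le_subn S j p : j * p <= S -> S %% p <= S - j * p.
Proof. by move=> le_jpS; rewrite -{1}(subnKC le_jpS) modnMDl leq_mod. Qed.

Lemma subn_modn_le S j p : S < j * p -> p - S %% p <= j * p - S.
Proof.
move=> lt_Sjp; have p_gt0 : 0 < p by case: p lt_Sjp; rewrite ?muln0.
have : p %| S %% p + (j * p - S).
  by rewrite /dvdn modnDml subnKC ?modnMl // ltnW.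
move=> /dvdn_leq; have := ltn_pmod S p_gt0; lia.
Qed.

Lemma sum_divn_bounds k (f : 'I_k -> nat) p : 0 < p ->
  (\sum_i f i %/ p) * p <= \sum_i f i /\
  \sum_i f i + k <= (\sum_i f i %/ p + k) * p.
Proof.
move=> p_gt0; split; first by rewrite big_distrl; apply: leq_sum => i _; apply: leq_divM.
have sum_const c : k * c = \sum_(i < k) c by rewrite sum_nat_const card_ord.
rewrite mulnDl big_distrl -[X in _ + X]muln1 sum_const sum_const -!big_split /=.
by apply: leq_sum => i _; rewrite addn1 -mulSnr ltn_ceil.
Qed.

Definition has_multiple_in (M lo n : nat) : bool :=
  has (fun j => lo <= j * M < lo + n) (iota 0 (lo + n)).

Lemma has_multiple_inP M lo n : 0 < M ->
  reflect (exists j, lo <= j * M < lo + n) (has_multiple_in M lo n).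
Proof.
move=> M_gt0; apply: (iffP hasP) => [[j _ hj]|[j hj]]; first by exists j.
exists j => //; rewrite mem_iota add0n.
by apply: leq_ltn_trans (leq_pmulr j M_gt0) _; case/andP: hj.
Qed.

Section Window.

Variables (p M n Q S : nat).
Hypotheses (lo_SM : Q * p <= S * M) (SM_hi : S * M < (Q + n) * p).

Lemma divn_mul_in_window : 0 < p -> p %| S -> Q <= S %/ p * M < Q + n.
Proof.
move=> p_gt0 /divnK S_eq; move: lo_SM SM_hi.
rewrite -{1 2}S_eq mulnAC -[Q <= _](leq_pmul2r p_gt0) -[_ < Q + n](ltn_pmul2r p_gt0).
by move=> -> ->.
Qed.

Lemma modn_near_of_window j : Q <= j * M < Q + n ->
  S %% p * M < n * p \/ (p - S %% p) * M < n * p.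
Proof.
case/andP=> lo_jM jM_hi.
have lo_jpM : Q * p <= j * p * M by rewrite mulnAC leq_mul2r lo_jM orbT.
have jpM_hi : j * p * M < (Q + n) * p.
  by rewrite mulnAC ltn_pmul2r //; case: p lo_SM SM_hi => //; rewrite !muln0.
move: SM_hi jpM_hi; rewrite mulnDl => SM_hi' jpM_hi.
case: (leqP (j * p) S) => [le_jpS|lt_Sjp]; [left|right].
- apply: leq_ltn_trans (leq_mul (modn_le_subn le_jpS) (leqnn M)) _.
  by rewrite mulnBl; lia.
- apply: leq_ltn_trans (leq_mul (subn_modn_le lt_Sjp) (leqnn M)) _.
  by rewrite mulnBl; lia.
Qed.

End Window.

Lemma sum_equalE p k (g : 'Z_p) (x : 'I_k -> 'Z_p) : 1 < p ->
  sum_equal g x = (p %| \sum_i (x i : nat) + (p - g)).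
Proof.
move=> p_gt1; have g_lt : (g : nat) < p by rewrite -[p in _ < p]Zp_cast ?ltn_ord.
rewrite /sum_equal -subr_eq0.
have -> : (\sum_i x i - g = (\sum_i (x i : nat) + (p - g))%:R)%R.
  rewrite natrD (natrB _ (ltnW g_lt)) (pchar_Zp p_gt1) sub0r natr_sum.
  by rewrite (eq_bigr _ (fun i _ => natr_Zp (x i))) natr_Zp.
by rewrite -(inj_eq val_inj) /= val_Zp_nat.
Qed.

Lemma sum_indicator_ord0 k c : 0 < k -> \sum_(i < k) (i == 0 :> nat) * c = c.
Proof. by case: k => // k _; rewrite big_ord_recl big1 ?addn0 /= ?mul1n. Qed.

Definition masked_input p k (g : 'Z_p) (a : nat) (i : 'I_k) (xi : 'Z_p) : nat :=
  (a * (xi + (i == 0 :> nat) * (p - g))) %% p.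

(* The random string r encodes the multiplier a = r + 1. *)
Definition sum_equal_protocol p k b (g : 'Z_p) : protocol p k 'I_p.-1 :=
  Protocol (fun i xi (r : 'I_p.-1) => bits b (masked_input g r.+1 i xi * 2 ^ b %/ p))
           (fun m _ => has_multiple_in (2 ^ b) (\sum_i nat_of_bits (m i)) k).

Section SumEqualProtocol.

Variables (p k b : nat) (g : 'Z_p) (x : 'I_k -> 'Z_p).
Hypotheses (p_prime : prime p) (k_gt0 : 0 < k).

Let p_gt1 : 1 < p := prime_gt1 p_prime.
Let p_gt0 : 0 < p := prime_gt0 p_prime.
Let M_gt0 : 0 < 2 ^ b := expn_gt0 2 b.
Let D := \sum_i (x i : nat) + (p - g).
Let S (r : 'I_p.-1) := \sum_i masked_input g r.+1 i (x i).
Let Q (r : 'I_p.-1) := \sum_i (masked_input g r.+1 i (x i) * 2 ^ b %/ p).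

Lemma run_sum_equal_protocol r :
  run (sum_equal_protocol k b g) x r = has_multiple_in (2 ^ b) (Q r) k.
Proof.
congr has_multiple_in; apply: eq_bigr => i _ /=.
by rewrite bitsK // ltn_divLR // mulnC ltn_pmul2l // ltn_pmod.
Qed.

Lemma masked_sum_window r : Q r * p <= S r * 2 ^ b /\ S r * 2 ^ b < (Q r + k) * p.
Proof.
have [lo hi] := sum_divn_bounds (fun i => masked_input g r.+1 i (x i) * 2 ^ b) p_gt0.
have -> : S r * 2 ^ b = \sum_i masked_input g r.+1 i (x i) * 2 ^ b by rewrite big_distrl.
by split=> //; apply: leq_trans _ hi; rewrite -addn1 leq_add2l.
Qed.

Lemma masked_sum_mod r : S r %% p = (r.+1 * D) %% p.
Proof.
by rewrite /S /masked_input modn_summ -big_distrr big_split /= sum_indicator_ord0.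
Qed.

Lemma sum_equal_protocol_accepts_yes r : p %| D -> run (sum_equal_protocol k b g) x r.
Proof.
move=> D_dvd; have [lo hi] := masked_sum_window r.
have S_dvd : p %| S r by rewrite /dvdn masked_sum_mod -modnMmr (eqP D_dvd) muln0 mod0n.
rewrite run_sum_equal_protocol; apply/has_multiple_inP => //.
by exists (S r %/ p); apply: divn_mul_in_window.
Qed.

Lemma sum_equal_protocol_accepts_near r : run (sum_equal_protocol k b g) x r ->
  (r.+1 * D) %% p <= k * p %/ 2 ^ b \/ p - (r.+1 * D) %% p <= k * p %/ 2 ^ b.
Proof.
rewrite run_sum_equal_protocol => /has_multiple_inP-/(_ M_gt0) [j in_window].
have [lo hi] := masked_sum_window r.
rewrite !leq_divRL // -masked_sum_mod.
by case: (modn_near_of_window lo hi in_window) => /ltnW; [left|right].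
Qed.

Lemma sum_equal_protocol_error_card :
  #|[set r | run (sum_equal_protocol k b g) x r != sum_equal g x]| <=
  2 * (k * p %/ 2 ^ b).
Proof.
rewrite sum_equalE // -/D; have [D_dvd|D_ndvd] := boolP (p %| D).
  rewrite (_ : [set r | _] = set0) ?cards0 //; apply/setP => r.
  by rewrite !inE sum_equal_protocol_accepts_yes.
set m := k * p %/ 2 ^ b; pose h (r : 'I_p.-1) := (r.+1 * D) %% p.
have a_lt (r : 'I_p.-1) : r.+1 < p by have := ltn_ord r; lia.
have h_range r : 0 < h r < p.
  by rewrite /h ltn_pmod // andbT (modn_mull_gt0 p_prime D_ndvd _ (a_lt r)).
have h_inj : injective h.
  by move=> r s /(modn_mull_inj p_prime D_ndvd (a_lt r) (a_lt s)) [] /val_inj.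
apply: leq_trans (_ : #|[pred r | h r <= m]| + #|[pred r | p - h r <= m]| <= _).
  rewrite -cardUI; apply: leq_trans (leq_addr _ _); apply: subset_leq_card.
  by apply/subsetP => r; rewrite !inE eqbF_neg negbK => /sum_equal_protocol_accepts_near/orP.
rewrite mul2n -addnn; apply: leq_add.
  apply: (@card_le_inj_range _ _ h) => [r s _ _|r]; first exact: h_inj.
  by rewrite inE => ->; case/andP: (h_range r) => ->.
apply: (@card_le_inj_range _ _ (fun r => p - h r)) => [r s _ _ /= e|r].
  by apply: h_inj; have := h_range r; have := h_range s; lia.
by rewrite inE => ->; have := h_range r; lia.
Qed.

End SumEqualProtocol.

Local Open Scope ring_scope.

Lemma lt_exp2_truncn_log2 (R : realType) (y : R) :
  0 < y -> y < 2 ^+ (Num.truncn (log2 y)).+1.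
Proof.
move=> y_gt0; have ln2_gt0 : 0 < ln (2 : R) by rewrite ln_gt0 // ltr1n.
rewrite -(ltr_ln (x := y)) ?posrE ?exprn_gt0 // lnXn // -[ln 2 *+ _]mulr_natr.
by rewrite mulrC -ltr_pdivrMr // -truncn_le_nat.
Qed.

Lemma sum_equal_protocol_error (R : realType) p k b (g : 'Z_p) (eps : R) :
  prime p -> (0 < k)%N -> 4 * k%:R <= eps * 2 ^+ b ->
  error_at_most (sum_equal_protocol k b g) (sum_equal g) eps.
Proof.
move=> p_prime k_gt0 k_le; have p_gt1 := prime_gt1 p_prime.
split=> [|x]; first by rewrite card_ord; lia.
move: (sum_equal_protocol_error_card b g x p_prime k_gt0); set B := #|_| => B_le.
have B_le_nat : (B * 2 ^ b <= 4 * k * p.-1)%N.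
  apply: leq_trans (_ : 2 * (k * p %/ 2 ^ b) * 2 ^ b <= _)%N.
    by rewrite leq_mul2r B_le orbT.
  rewrite -mulnA; apply: leq_trans (leq_mul (leqnn 2) (leq_divM _ _)) _; nia.
have p_pred_gt0 : 0 < p.-1%:R :> R by rewrite ltr0n; lia.
have exp2_gt0 : 0 < 2 ^+ b :> R by rewrite exprn_gt0.
rewrite /error_prob card_ord ler_pdivrMr // -(ler_pM2r exp2_gt0).
apply: le_trans (_ : 4 * k%:R * p.-1%:R <= _).
  by rewrite -natrX -!natrM ler_nat.
by rewrite [leRHS]mulrAC ler_pM2r.
Qed.

Lemma sum_equal_protocol_comm (R : realType) p k b (g : 'Z_p) (c : R) :
  (k * b)%:R <= c -> total_comm_at_most (sum_equal_protocol k b g) c.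
Proof.
move=> kb_le x r; rewrite (eq_bigr (fun=> b)) => [|i _]; last by rewrite /= size_bits.
by rewrite sum_nat_const card_ord.
Qed.

Theorem theorem4p3 (R : realType) :
  exists C : R,
    forall (p k : nat) (eps : R) (g : 'Z_p),
      prime p -> (0 < k)%N -> 0 < eps -> eps < 1 ->
      exists (Rnd : finType) (P : protocol p k Rnd),
        error_at_most P (sum_equal g) eps /\
        total_comm_at_most P (k%:R * log2 (k%:R / eps) + C * k%:R).
Proof.
exists 3 => p k eps g p_prime k_gt0 eps_gt0 eps_lt1.
set L := log2 _; set n := Num.truncn L.
have k_gt0R : 0 < k%:R :> R by rewrite ltr0n.
have L_ge0 : 0 <= L.
  apply: divr_ge0; apply: ln_ge0; rewrite ?ler1n // ler_pdivlMr // mul1r.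
  by rewrite (le_trans (ltW eps_lt1)) // ler1n.
exists 'I_p.-1, (sum_equal_protocol k n.+3 g); split.
  apply: sum_equal_protocol_error => //.
  have := lt_exp2_truncn_log2 (divr_gt0 k_gt0R eps_gt0).
  rewrite -/L -/n ltr_pdivrMr // (exprS _ n.+2) (exprS _ n.+1).
  by move: (2 ^+ n.+1) => X; lra.
apply: sum_equal_protocol_comm.
rewrite natrM -addn3 natrD mulrDr [_ * 3]mulrC.
by rewrite lerD2r ler_wpM2l ?ler0n // truncn_le.
Qed.
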